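(* Let $S$ be a specialisation independent scheduling rule, $V$ a finite set of variables, $G$ and $X$ p-goals, $\gamma$ a substitution and $\underline\tau$ a shifting such that $X+G\gamma\underline{\tau}$ is defined. If there is a p-SLD derivation $X+G\gamma\underline{\tau}\xrightarrow{S,D}\cdot$ via $S$, then there is a p-SLD derivation $Dr=(G\xrightarrow{S,\,D/(G\gamma\underline{\tau})}\cdot)$ via $S$ with $nvar(Dr)\cap V=\emptyset$.
   Context: A p-atom is a pair $a[p]$ of an atom $a$ and a rational priority $p$. A p-goal is a finite set of p-atoms with pairwise distinct priorities, regarded as a list ordered by increasing priority. Substitutions act on atoms and leave priorities unchanged. A clause is $h\leftarrow B$ with $h$ an atom and $B$ a p-goal. For p-goals with no common priority, $F+G=F\cup G$; $F|G$ denotes $F+G$ when all priorities of $F$ are smaller than those of $G$. A shifting $\underline{\pi}$ is a strictly increasing bijection $\mathbb{Q}\to\mathbb{Q}$ acting on priorities ($G\underline\pi$). Priority derivation step: for a p-goal $a|F$ ($a$ of least priority), clause $c=(h\leftarrow B)$, renaming $\xi$ with $var(a|F)\cap var(c\xi)=\emptyset$, idempotent relevant mgu $\theta$ of $a$ and $h\xi$, and shifting $\underline{\pi}$ with $F$, $B\xi\underline{\pi}$ sharing no priority: $a|F\xrightarrow{c\xi,\theta}(F+B\xi\underline{\pi})\theta$. A p-SLD derivation is a sequence of such steps with each renamed clause $c_j\xi_j$ variable-disjoint from the initial goal and all earlier renamed clauses; its template is the sequence of applied clauses and $nvar$ of a derivation is the union of the sets $var(c_j\xi_j)$. Lowering: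 for $c=(h\leftarrow B)$, a step $a\lambda\underline{\sigma}|(K\lambda\underline{\sigma}+X)\xrightarrow{c}(X+K\lambda\underline{\sigma}+B\xi''\underline{\theta}'')\alpha''$ is a lowering by $X$ of a step $a|K\xrightarrow{c}(K+B\xi'\underline{\theta}')\alpha'$; it is a congruent lowering by $X$ if some shifting $\underline{\rho}$ has $K\underline{\rho}=K\underline{\sigma}$ and $B\underline{\theta}'\underline{\rho}=B\underline{\theta}''$. Steps are congruent lowerings of each other if each is a congruent lowering of the other. A set $S$ of steps is complete if (i) whenever some step $G\xrightarrow{c}\cdot$ exists, some step $G\xrightarrow{c}\cdot$ lies in $S$, and (ii) $S$ contains every step that is a congruent lowering of each other with a step of $S$. $S$ is specialisation independent if whenever $Ds_1,Ds_2\in S$ and $Ds_2$ is a lowering of $Ds_1$ by $X$, $Ds_2$ is a congruent lowering of $Ds_1$ by $X$. A specialisation independent scheduling rule is a complete specialisation independent set of steps. $G\xrightarrow{S,M}R$ denotes a p-SLD derivation with template $M$ all of whose steps lie in $S$. Sub-templates: for a step $a|(F+G)\xrightarrow{c}Q=((F+G)+B\xi\underline{\pi})\alpha$, $Q/F=F\alpha$, $Q/a=B\xi\underline\pi\alpha$, $c/a=c$, $c/F=$ empty, $c/(a|F)=c$; for $F+G\xrightarrow{c}Q\xrightarrow{K}R$, recursively $(c|K)/F=(c/F)|(K/(Q/F))$. Thus $D/F$ is the subsequence of the template $D$ of clauses applied to p-atoms of $F$ or descending from $F$. *)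

From mathcomp Require Import all_boot all_order all_algebra.
From Stdlib Require List.
Set Implicit Arguments. Unset Strict Implicit. Unset Printing Implicit Defensive.
Import Order.TTheory GRing.Theory Num.Theory.
Local Open Scope ring_scope.

Inductive term : Type :=
| Var : nat -> term
| Fun : nat -> seq term -> term.

Definition atom := (nat * seq term)%type.

Definition subst := nat -> term.

Fixpoint term_subst (s : subst) (t : term) : term :=
  match t with
  | Var x => s x
  | Fun f ts => Fun f (map (term_subst s) ts)
  end.

Definition atom_subst (s : subst) (a : atom) : atom :=
  (a.1, map (term_subst s) a.2).

Fixpoint var_in_term (v : nat) (t : term) : Prop :=
  match t with
  | Var x => x = v
  | Fun _ ts =>
      (fix aux (l : seq term) : Prop :=
         match l with [::] => False | u :: l' => var_in_term v u \/ aux l' end) ts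
  end.

Definition var_in_atom (v : nat) (a : atom) : Prop :=
  exists2 t, List.In t a.2 & var_in_term v t.

Definition renaming (xi : nat -> nat) : Prop := bijective xi.
Definition ren_subst (xi : nat -> nat) : subst := fun v => Var (xi v).

Definition unifier (th : subst) (a b : atom) : Prop :=
  atom_subst th a = atom_subst th b.

Definition more_general (th dl : subst) : Prop :=
  exists eta : subst, forall v, dl v = term_subst eta (th v).

Definition mgu (th : subst) (a b : atom) : Prop :=
  unifier th a b /\ forall dl, unifier dl a b -> more_general th dl.

Definition idempotent (th : subst) : Prop :=
  forall v, term_subst th (th v) = th v.

Definition var_of_subst (th : subst) (v : nat) : Prop :=
  th v <> Var v \/ exists2 w, th w <> Var w & var_in_term v (th w).

Definition relevant (th : subst) (a b : atom) : Prop :=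
  forall v, var_of_subst th v -> var_in_atom v a \/ var_in_atom v b.

Definition idem_rel_mgu (th : subst) (a b : atom) : Prop :=
  mgu th a b /\ idempotent th /\ relevant th a b.

Definition patom := (atom * rat)%type.

(* A p-goal is a finite set of p-atoms with pairwise distinct priorities,
   represented canonically as the list ordered by strictly increasing
   priority. *)
Definition pgoal := seq patom.
Definition is_pgoal (G : pgoal) : Prop :=
  sorted (fun x y : patom => x.2 < y.2) G.

Definition var_in_pgoal (v : nat) (G : pgoal) : Prop :=
  exists2 x, List.In x G & var_in_atom v x.1.

Definition prio_disjoint (F G : pgoal) : Prop :=
  forall x y, List.In x F -> List.In y G -> x.2 <> y.2.

(* F + G (meaningful when prio_disjoint F G): the union, as sorted list *)
Definition pplus (F G : pgoal) : pgoal :=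
  sort (fun x y : patom => x.2 <= y.2) (F ++ G).

Definition pgoal_subst (s : subst) (G : pgoal) : pgoal :=
  map (fun x : patom => (atom_subst s x.1, x.2)) G.

Definition shifting (pi : rat -> rat) : Prop :=
  {homo pi : x y / x < y} /\ bijective pi.

Definition pgoal_shift (pi : rat -> rat) (G : pgoal) : pgoal :=
  map (fun x : patom => (x.1, pi x.2)) G.

Record clause := Clause { chead : atom; cbody : pgoal }.

Definition clause_ok (c : clause) : Prop := is_pgoal (cbody c).

Definition var_in_ren_clause (c : clause) (xi : nat -> nat) (v : nat) : Prop :=
  var_in_atom v (atom_subst (ren_subst xi) (chead c)) \/
  var_in_pgoal v (pgoal_subst (ren_subst xi) (cbody c)).

(** * Priority derivation steps
   a|F --(c xi, theta)--> (F + B xi pi) theta *)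
Record step := Step {
  s_goal : pgoal;
  s_clause : clause;
  s_ren : nat -> nat;
  s_mgu : subst;
  s_shift : rat -> rat;
  s_res : pgoal
}.

Definition ren_body (d : step) : pgoal :=
  pgoal_shift (s_shift d) (pgoal_subst (ren_subst (s_ren d)) (cbody (s_clause d))).

Definition valid_step (d : step) : Prop :=
  exists (a : patom) (F : pgoal),
    s_goal d = a :: F /\
    is_pgoal (a :: F) /\
    clause_ok (s_clause d) /\
    renaming (s_ren d) /\
    (forall v, var_in_pgoal v (a :: F) ->
               ~ var_in_ren_clause (s_clause d) (s_ren d) v) /\
    idem_rel_mgu (s_mgu d) a.1
      (atom_subst (ren_subst (s_ren d)) (chead (s_clause d))) /\
    shifting (s_shift d) /\
    prio_disjoint F (ren_body d) /\
    s_res d = pgoal_subst (s_mgu d) (pplus F (ren_body d)).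

Fixpoint chain (G : pgoal) (ds : seq step) : Prop :=
  match ds with
  | [::] => True
  | d :: ds' => [/\ s_goal d = G, valid_step d & chain (s_res d) ds']
  end.

Fixpoint apart (used : nat -> Prop) (ds : seq step) : Prop :=
  match ds with
  | [::] => True
  | d :: ds' =>
      (forall v, var_in_ren_clause (s_clause d) (s_ren d) v -> ~ used v) /\
      apart (fun v => used v \/ var_in_ren_clause (s_clause d) (s_ren d) v) ds'
  end.

Definition pSLD (G : pgoal) (ds : seq step) : Prop :=
  chain G ds /\ apart (fun v => var_in_pgoal v G) ds.

Definition template (ds : seq step) : seq clause := map s_clause ds.

Definition nvar (ds : seq step) (v : nat) : Prop :=
  exists2 d, List.In d ds & var_in_ren_clause (s_clause d) (s_ren d) v.

Definition via (S : step -> Prop) (ds : seq step) : Prop :=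
  forall d, List.In d ds -> S d.

(** Membership and
   removal of the selected p-atom are tested through its priority, which is
   exact since the priorities of a p-goal are pairwise distinct. *)
Fixpoint subtemplate (F : pgoal) (ds : seq step) : seq clause :=
  match ds with
  | [::] => [::]
  | d :: ds' =>
      match s_goal d with
      | [::] => [::]
      | a :: _ =>
          if a.2 \in map snd F then
            s_clause d ::
              subtemplate (pgoal_subst (s_mgu d)
                   (pplus (filter (fun x : patom => x.2 != a.2) F) (ren_body d))) ds'
          else subtemplate (pgoal_subst (s_mgu d) F) ds'
      end
  end.

(** * Lowerings
   d2 : a lam sig | (K lam sig + X) --c--> ...   is a lowering by X of
   d1 : a | K --c--> ... *)
Definition lowering_with (d1 d2 : step) (X : pgoal) (lam : subst)
    (sig : rat -> rat) (a : patom) (K : pgoal) : Prop :=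
  valid_step d1 /\ valid_step d2 /\ shifting sig /\ is_pgoal X /\
  s_goal d1 = a :: K /\
  s_clause d2 = s_clause d1 /\
  prio_disjoint (pgoal_shift sig (pgoal_subst lam K)) X /\
  (forall y, List.In y (pplus (pgoal_shift sig (pgoal_subst lam K)) X) ->
             sig a.2 < y.2) /\
  s_goal d2 = pgoal_shift sig (pgoal_subst lam [:: a]) ++
              pplus (pgoal_shift sig (pgoal_subst lam K)) X.

Definition lowering (d1 d2 : step) (X : pgoal) : Prop :=
  exists lam sig a K, lowering_with d1 d2 X lam sig a K.

Definition cong_lowering (d1 d2 : step) (X : pgoal) : Prop :=
  exists lam sig a K rho, lowering_with d1 d2 X lam sig a K /\
    [/\ shifting rho,
        pgoal_shift rho K = pgoal_shift sig K
      & pgoal_shift rho (pgoal_shift (s_shift d1) (cbody (s_clause d1))) =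
        pgoal_shift (s_shift d2) (cbody (s_clause d2))].

Definition cong_each_other (d1 d2 : step) : Prop :=
  (exists X, cong_lowering d1 d2 X) /\ (exists X, cong_lowering d2 d1 X).

Definition complete (S : step -> Prop) : Prop :=
  [/\ forall d, S d -> valid_step d,
      (forall (G : pgoal) (c : clause),
          (exists d, [/\ valid_step d, s_goal d = G & s_clause d = c]) ->
          exists d, [/\ S d, s_goal d = G & s_clause d = c])
    & (forall d d', S d -> valid_step d' -> cong_each_other d d' -> S d')].

Definition spec_independent (S : step -> Prop) : Prop :=
  forall d1 d2 X, S d1 -> S d2 -> lowering d1 d2 X -> cong_lowering d1 d2 X.

Definition spec_indep_sched_rule (S : step -> Prop) : Prop :=
  complete S /\ spec_independent S.

From HB Require Import structures.
From mathcomp Require Import all_boot all_order all_algebra.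
From Stdlib Require List.
From mathcomp Require Import zify.
Set Implicit Arguments. Unset Strict Implicit. Unset Printing Implicit Defensive.
Import Order.TTheory GRing.Theory Num.Theory.

(* Induction on the derivation of [X + G gamma tau].  A step selecting an atom
   of [X] leaves the image of [G] intact up to its mgu [theta]: keep [G] and
   replace [gamma] by [gamma theta].  A step selecting the image of the first
   atom [a] of [G] is imitated on [G] itself, with the same clause renamed
   apart from [G] and [V]: [gamma] glued with the given mgu unifies [a] with
   the renamed head, so an idempotent relevant mgu exists, and completeness
   puts such a step in [S].  The given step is then a lowering of the new one
   by [X], so specialisation independence yields a shifting [rho] aligning the
   priorities of both resolvents, and the rest of the derivation again starts
   from an instance [X' + G' eta rho] of the new resolvent [G']. *)

Fixpoint term_list_ind (P : term -> Prop) (HV : forall x, P (Var x))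
  (HF : forall f ts, List.Forall P ts -> P (Fun f ts)) (t : term) : P t :=
  match t with
  | Var x => HV x
  | Fun f ts => HF f ts ((fix aux (l : seq term) : List.Forall P l :=
       match l with
       | [::] => List.Forall_nil P
       | u :: l' => List.Forall_cons u (term_list_ind HV HF u) (aux l')
       end) ts)
  end.

Fixpoint term_tree (t : term) : GenTree.tree nat :=
  match t with Var x => GenTree.Leaf x | Fun f ts => GenTree.Node f (map term_tree ts) end.

Fixpoint tree_term (g : GenTree.tree nat) : term :=
  match g with GenTree.Leaf x => Var x | GenTree.Node f gs => Fun f (map tree_term gs) end.

Lemma term_treeK : cancel term_tree tree_term.
Proof.
elim/term_list_ind => [x|f ts H] //=; congr Fun; elim: H => //= u l Hu _ IH.
by rewrite Hu IH.
Qed.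

HB.instance Definition _ := Equality.copy term (can_type term_treeK).

Fixpoint term_vars (t : term) : seq nat :=
  match t with Var x => [:: x] | Fun _ ts => flatten (map term_vars ts) end.

Lemma var_in_termE v t : var_in_term v t <-> v \in term_vars t.
Proof.
elim/term_list_ind: t => [x|f ts H] /=; first by rewrite inE; split => [->|/eqP ->].
elim: H => //= u l Hu _ IH; rewrite mem_cat; split.
  by case=> [/Hu ->|/IH ->] //; rewrite orbT.
by case/orP => [/Hu|/IH]; auto.
Qed.

Lemma eq_in_term_subst s1 s2 t : {in term_vars t, s1 =1 s2} -> term_subst s1 t = term_subst s2 t.
Proof.
elim/term_list_ind: t => [x|f ts H] /=; first by move=> h; apply: h; rewrite inE.
move=> h; congr Fun; elim: H h => //= u l Hu _ IH h.
rewrite Hu ?IH // => y hy; apply: h; rewrite mem_cat hy ?orbT //.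
Qed.

Lemma term_subst_comp s1 s2 t :
  term_subst s1 (term_subst s2 t) = term_subst (fun v => term_subst s1 (s2 v)) t.
Proof.
elim/term_list_ind: t => [x|f ts H] //=; congr Fun; rewrite -map_comp.
by elim: H => //= u l Hu _ IH; rewrite Hu IH.
Qed.

Lemma term_subst_Var t : term_subst Var t = t.
Proof.
elim/term_list_ind: t => [x|f ts H] //=; congr Fun.
by elim: H => //= u l Hu _ IH; rewrite Hu IH.
Qed.

Lemma term_vars_subst_inv s t v :
  v \in term_vars (term_subst s t) -> exists2 u, u \in term_vars t & v \in term_vars (s u).
Proof.
elim/term_list_ind: t => [x|f ts H] /=; first by move=> h; exists x; rewrite ?inE.
elim: H => //= u l Hu _ IH; rewrite !mem_cat => /orP [/Hu [w h1 h2]|/IH [w h1 h2]];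
  exists w => //; rewrite mem_cat h1 ?orbT //.
Qed.

Lemma flatten_term_vars_In v (l : seq term) :
  v \in flatten (map term_vars l) -> exists2 t, List.In t l & var_in_term v t.
Proof.
elim: l => //= t l IH; rewrite mem_cat => /orP [h|/IH [u h1 h2]].
  by exists t; [left | rewrite var_in_termE].
by exists u; [right|].
Qed.

Lemma In_flatten_term_vars v (l : seq term) t :
  List.In t l -> var_in_term v t -> v \in flatten (map term_vars l).
Proof.
elim: l => //= u l IH [<- /var_in_termE h|h1 h2]; rewrite mem_cat ?h //.
by rewrite (IH h1 h2) orbT.
Qed.

Fixpoint term_size (t : term) : nat :=
  match t with Var _ => 1 | Fun _ ts => (sumn (map term_size ts)).+1 end.

Lemma term_size_subst_mem s x t :
  x \in term_vars t -> term_size (s x) <= term_size (term_subst s t).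
Proof.
elim/term_list_ind: t => [y|f ts H] /=; first by rewrite inE => /eqP ->.
elim: H => //= u l Hu _ IH; rewrite mem_cat => /orP [/Hu h|/IH h]; lia.
Qed.

Lemma occurs_check s x t : t <> Var x -> s x = term_subst s t -> x \notin term_vars t.
Proof.
move=> neq hx; apply/negP; case: t neq hx => [y|f ts] /=.
  by rewrite inE => neq _ /eqP exy; apply: neq; rewrite exy.
move=> _ hx hin; have : term_size (s x) < term_size (term_subst s (Fun f ts)).
  elim: ts hin {hx} => //= u l IH; rewrite mem_cat.
  by case/orP => [/(term_size_subst_mem s) h|/IH h] /=; lia.
by rewrite hx /= ltnn.
Qed.

Definition subst1 (x : nat) (t : term) : subst := fun v => if v == x then t else Var v.

Lemma subst1_notin x t : x \notin term_vars t -> term_subst (subst1 x t) t = t.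
Proof.
move=> nox; rewrite -[RHS]term_subst_Var; apply: eq_in_term_subst => v hv /=.
by rewrite /subst1; case: eqP => // ev; move: hv; rewrite ev (negbTE nox).
Qed.

Lemma term_subst_subst1 d x t u : d x = term_subst d t ->
  term_subst d (term_subst (subst1 x t) u) = term_subst d u.
Proof.
move=> hd; rewrite term_subst_comp; apply: eq_in_term_subst => v _ /=.
by rewrite /subst1; case: eqP => [->|].
Qed.

Lemma term_vars_subst1 x t u v : v \in term_vars (term_subst (subst1 x t) u) ->
  (v \in term_vars u) || (v \in term_vars t).
Proof.
case/term_vars_subst_inv => w hw; rewrite /subst1; case: eqP => [_ ->|_]; first by rewrite orbT.
by rewrite inE => /eqP ->; rewrite hw.
Qed.

Lemma notin_term_vars_subst1 x t u :
  x \notin term_vars t -> x \notin term_vars (term_subst (subst1 x t) u).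
Proof.
move=> nox; apply/negP => /term_vars_subst_inv [w _]; rewrite /subst1.
by case: eqP => [_|nw]; [rewrite (negbTE nox) | rewrite inE => /eqP ex; apply: nw].
Qed.

Lemma var_of_subst1 x t v : var_of_subst (subst1 x t) v -> v = x \/ v \in term_vars t.
Proof.
rewrite /subst1; case=> [|[w]]; first by case: eqP => [->|//]; left.
by case: eqP => [_ _ /var_in_termE|_ []]; [right|].
Qed.

Lemma var_of_subst_comp s1 s2 v :
  var_of_subst (fun w => term_subst s1 (s2 w)) v -> var_of_subst s1 v \/ var_of_subst s2 v.
Proof.
case=> [hv|[w hw /var_in_termE /term_vars_subst_inv [u hu hvu]]].
  by case: (s2 v =P Var v) => [e|ne]; [left; left; move: hv; rewrite e | right; left].
case: (s1 u =P Var u) => [e|ne]; last by left; right; exists u => //; apply/var_in_termE.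
move: hvu; rewrite e inE => /eqP ->.
case: (s2 w =P Var w) => [e2|ne2]; last by right; right; exists w => //; apply/var_in_termE.
by move: hu; rewrite e2 inE => /eqP eu; subst u; case: hw; rewrite e2 /= e.
Qed.

(** * Unification *)

Definition equation := (term * term)%type.

Definition solves (s : subst) (E : seq equation) : bool :=
  all (fun p : equation => term_subst s p.1 == term_subst s p.2) E.

Definition solvable (E : seq equation) : Prop := exists d, solves d E.

Definition eqs_vars (E : seq equation) : seq nat :=
  flatten (map (fun p : equation => term_vars p.1 ++ term_vars p.2) E).

Definition eqs_nvars (E : seq equation) : nat := size (undup (eqs_vars E)).

Definition eqs_size (E : seq equation) : nat :=
  sumn (map (fun p : equation => term_size p.1 + term_size p.2) E).

Definition eqs_subst (s : subst) (E : seq equation) : seq equation :=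
  map (fun p : equation => (term_subst s p.1, term_subst s p.2)) E.

(* The generality witness of a solution [d] is [d] itself ([d = th; d]);
   taking [d := th] shows that such an mgu is idempotent. *)
Definition eqs_mgu (E : seq equation) (th : subst) : Prop :=
  [/\ solves th E,
      (forall d, solves d E -> forall v, d v = term_subst d (th v))
    & (forall v, var_of_subst th v -> v \in eqs_vars E)].

Lemma solves_cons s p E :
  solves s (p :: E) = (term_subst s p.1 == term_subst s p.2) && solves s E.
Proof. by []. Qed.

Lemma eqs_vars_cons p E : eqs_vars (p :: E) = term_vars p.1 ++ term_vars p.2 ++ eqs_vars E.
Proof. by rewrite /eqs_vars /= catA. Qed.

Lemma solves_cat d E1 E2 : solves d (E1 ++ E2) = solves d E1 && solves d E2.
Proof. by rewrite /solves all_cat. Qed.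

Lemma eqs_vars_cat E1 E2 : eqs_vars (E1 ++ E2) = eqs_vars E1 ++ eqs_vars E2.
Proof. by rewrite /eqs_vars map_cat flatten_cat. Qed.

Lemma eqs_size_cat E1 E2 : eqs_size (E1 ++ E2) = eqs_size E1 + eqs_size E2.
Proof. by rewrite /eqs_size map_cat sumn_cat. Qed.

Lemma solves_zip d ts us : size ts = size us ->
  solves d (zip ts us) = (map (term_subst d) ts == map (term_subst d) us).
Proof.
elim: ts us => [|t ts IH] [|u us] //= [hs].
by move: (IH us hs); rewrite /solves /= => ->; rewrite eqseq_cons.
Qed.

Lemma eqs_vars_zip ts us :
  {subset eqs_vars (zip ts us) <= flatten (map term_vars ts) ++ flatten (map term_vars us)}.
Proof.
elim: ts us => [|t ts IH] [|u us] //= v.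
rewrite eqs_vars_cons /= !mem_cat => /orP [->//|/orP [->|/IH]]; first by rewrite !orbT.
by rewrite mem_cat => /orP [->|->]; rewrite ?orbT.
Qed.

Lemma eqs_size_zip ts us : size ts = size us ->
  eqs_size (zip ts us) = sumn (map term_size ts) + sumn (map term_size us).
Proof.
elim: ts us => [|t ts IH] [|u us] //= [hs].
rewrite /eqs_size /= -/(eqs_size _) IH //; lia.
Qed.

Lemma solves_subst1 d x t E : d x = term_subst d t ->
  solves d (eqs_subst (subst1 x t) E) = solves d E.
Proof.
by move=> hd; rewrite /solves all_map; apply: eq_all => p /=; rewrite !term_subst_subst1.
Qed.

Lemma eqs_vars_subst1 x t E v : v \in eqs_vars (eqs_subst (subst1 x t) E) ->
  (v \in eqs_vars E) || (v \in term_vars t).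
Proof.
rewrite /eqs_vars -map_comp => /flatten_mapP [p hp] /=.
rewrite mem_cat => /orP [] /term_vars_subst1 /orP [h|->]; rewrite ?orbT //;
  by apply/orP; left; apply/flatten_mapP; exists p => //; rewrite mem_cat h ?orbT.
Qed.

Lemma notin_eqs_vars_subst1 x t E :
  x \notin term_vars t -> x \notin eqs_vars (eqs_subst (subst1 x t) E).
Proof.
move=> nox; apply/negP; rewrite /eqs_vars -map_comp => /flatten_mapP [p hp] /=.
by rewrite mem_cat !(negbTE (notin_term_vars_subst1 _ nox)).
Qed.

Lemma eqs_nvars_sub E1 E2 :
  {subset eqs_vars E1 <= eqs_vars E2} -> eqs_nvars E1 <= eqs_nvars E2.
Proof.
move=> h; apply: uniq_leq_size; first exact: undup_uniq.
by move=> y; rewrite !mem_undup; apply: h.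
Qed.

Lemma eqs_nvars_sub_lt E1 E2 x : {subset eqs_vars E1 <= eqs_vars E2} ->
  x \in eqs_vars E2 -> x \notin eqs_vars E1 -> eqs_nvars E1 < eqs_nvars E2.
Proof.
move=> h hx hn; rewrite /eqs_nvars.
have -> : (size (undup (eqs_vars E1))).+1 = size (x :: undup (eqs_vars E1)) by [].
apply: uniq_leq_size; first by rewrite /= mem_undup hn undup_uniq.
by move=> y; rewrite inE !mem_undup => /orP [/eqP ->|/h].
Qed.

Lemma eqs_mgu_equiv E E' th : (forall d, solves d E' = solves d E) ->
  {subset eqs_vars E' <= eqs_vars E} -> eqs_mgu E' th -> eqs_mgu E th.
Proof.
move=> hu hv [u1 g1 r1]; split.
- by rewrite -hu.
- by move=> d; rewrite -hu; apply: g1.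
- by move=> v /r1 /hv.
Qed.

Lemma eqs_mgu_same_var x E th : eqs_mgu E th -> eqs_mgu ((Var x, Var x) :: E) th.
Proof.
apply: eqs_mgu_equiv => [d|v hv]; first by rewrite solves_cons eqxx.
by rewrite eqs_vars_cons !mem_cat hv !orbT.
Qed.

Lemma eqs_mgu_swap t u E th : eqs_mgu ((u, t) :: E) th -> eqs_mgu ((t, u) :: E) th.
Proof.
apply: eqs_mgu_equiv => [d|v]; first by rewrite !solves_cons eq_sym.
by rewrite !eqs_vars_cons !mem_cat; case/or3P => ->; rewrite ?orbT.
Qed.

Lemma eqs_mgu_decompose f ts us E th : size ts = size us ->
  eqs_mgu (zip ts us ++ E) th -> eqs_mgu ((Fun f ts, Fun f us) :: E) th.
Proof.
move=> hs; apply: eqs_mgu_equiv => [d|v].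
  rewrite solves_cat solves_zip // solves_cons /=.
  by congr andb; apply/eqP/eqP => [->|[->]].
rewrite eqs_vars_cat eqs_vars_cons /= !mem_cat => /orP [/eqs_vars_zip|->]; last by rewrite !orbT.
by rewrite mem_cat => /orP [->|->]; rewrite ?orbT.
Qed.

Lemma eqs_mgu_elim_var x t E th : x \notin term_vars t ->
  eqs_mgu (eqs_subst (subst1 x t) E) th ->
  eqs_mgu ((Var x, t) :: E) (fun v => term_subst th (subst1 x t v)).
Proof.
move=> nox [u1 g1 r1].
have e2 u : term_subst (fun v => term_subst th (subst1 x t v)) u =
            term_subst th (term_subst (subst1 x t) u) by rewrite term_subst_comp.
split.
- rewrite solves_cons /= e2 subst1_notin // /subst1 eqxx eqxx /=.
  by move: u1; rewrite /solves all_map; apply: sub_all => p /=; rewrite !e2.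
- move=> d; rewrite solves_cons => /andP [/eqP hd hdE] v; rewrite /= term_subst_comp.
  have -> : term_subst (fun w => term_subst d (th w)) (subst1 x t v) =
            term_subst d (subst1 x t v).
    by apply: eq_in_term_subst => w _; rewrite -g1 // solves_subst1.
  by rewrite /subst1; case: eqP => [->|].
- move=> v; rewrite eqs_vars_cons !mem_cat.
  case/var_of_subst_comp => [/r1/eqs_vars_subst1/orP [] ->|/var_of_subst1 [->|->]];
    by rewrite ?inE ?eqxx ?orbT.
Qed.

Lemma eqs_mgu_var x t E : t <> Var x ->
  (forall E', eqs_nvars E' < eqs_nvars ((Var x, t) :: E) -> solvable E' ->
     exists th, eqs_mgu E' th) ->
  solvable ((Var x, t) :: E) -> exists th, eqs_mgu ((Var x, t) :: E) th.
Proof.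
move=> neq IH [d]; rewrite solves_cons => /andP [/eqP hx hd].
have nox := occurs_check neq hx.
have [th hth] : exists th, eqs_mgu (eqs_subst (subst1 x t) E) th.
  apply: IH; last by exists d; rewrite solves_subst1.
  apply: (eqs_nvars_sub_lt (x := x)).
  - by move=> v /eqs_vars_subst1 /orP [] h; rewrite eqs_vars_cons !mem_cat h ?orbT.
  - by rewrite eqs_vars_cons inE eqxx.
  - exact: notin_eqs_vars_subst1.
by eexists; exact: eqs_mgu_elim_var nox hth.
Qed.

Lemma eqs_mgu_exists_rec n : forall m E, eqs_nvars E < n -> eqs_size E < m ->
  solvable E -> exists th, eqs_mgu E th.
Proof.
elim: n => [//|n IHn] m; elim: m => [//|m IHm] E hn hm hE.
case: E hn hm hE => [|[t u] E] hn hm hE; first by exists Var; split => // v [|[w]].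
have IHv E' : eqs_nvars E' < eqs_nvars ((t, u) :: E) -> solvable E' ->
    exists th, eqs_mgu E' th.
  by move=> h; apply: (IHn (eqs_size E').+1) => //; apply: leq_trans h hn.
have hsize : eqs_size ((t, u) :: E) = term_size t + term_size u + eqs_size E by [].
case: t u hn hm hE IHv hsize => [x|f ts] [y|g us] hn hm hE IHv hsize.
- case: (x =P y) => [<-|nxy]; last by apply: eqs_mgu_var => // -[/esym].
  have [th hth] : exists th, eqs_mgu E th.
    apply: IHm.
    + apply: leq_ltn_trans hn; apply: eqs_nvars_sub => v hv.
      by rewrite eqs_vars_cons !mem_cat hv !orbT.
    + by move: hm; rewrite hsize /=; lia.
    + by case: hE => d; rewrite solves_cons => /andP [_ hd]; exists d.
  by exists th; apply: eqs_mgu_same_var.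
- exact: eqs_mgu_var.
- have hswap : {subset eqs_vars ((Var y, Fun f ts) :: E) <= eqs_vars ((Fun f ts, Var y) :: E)}.
    by move=> v; rewrite !eqs_vars_cons !mem_cat; case/or3P => ->; rewrite ?orbT.
  have [th hth] : exists th, eqs_mgu ((Var y, Fun f ts) :: E) th.
    apply: eqs_mgu_var => // [E' hE'|].
      by apply: IHv; apply: leq_trans hE' (eqs_nvars_sub hswap).
    by case: hE => d; rewrite !solves_cons eq_sym; exists d.
  by exists th; apply: eqs_mgu_swap.
- case: hE => d; rewrite solves_cons /= => /andP [/eqP [<- hmap] hd].
  have hs : size ts = size us by rewrite -(size_map (term_subst d) ts) hmap size_map.
  have [th hth] : exists th, eqs_mgu (zip ts us ++ E) th.
    apply: IHm.
    + apply: leq_ltn_trans hn; apply: eqs_nvars_sub => v.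
      rewrite eqs_vars_cat eqs_vars_cons /= !mem_cat => /orP [/eqs_vars_zip|->];
        last by rewrite !orbT.
      by rewrite mem_cat => /orP [->|->]; rewrite ?orbT.
    + by move: hm; rewrite eqs_size_cat eqs_size_zip // hsize /=; lia.
    + by exists d; rewrite solves_cat solves_zip // hmap eqxx.
  by exists th; apply: eqs_mgu_decompose.
Qed.

Lemma eqs_mgu_exists E : solvable E -> exists th, eqs_mgu E th.
Proof. exact: (@eqs_mgu_exists_rec (eqs_nvars E).+1 (eqs_size E).+1 E). Qed.

Lemma idem_rel_mgu_exists a b : (exists d, unifier d a b) -> exists th, idem_rel_mgu th a b.
Proof.
case=> d; case: a b => [p ts] [q us]; rewrite /unifier /atom_subst /= => -[epq hmap].
subst q.
have hs : size ts = size us by rewrite -(size_map (term_subst d) ts) hmap size_map.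
have hu : solvable (zip ts us) by exists d; rewrite solves_zip // hmap.
have [th [u1 g1 r1]] := eqs_mgu_exists hu.
exists th; split; [split|split].
- rewrite /unifier /atom_subst /=; congr pair; apply/eqP; by rewrite -solves_zip.
- move=> dl; rewrite /unifier /atom_subst /= => -[hm]; exists dl => v; apply: g1.
  by rewrite solves_zip // hm.
- by move=> v; rewrite -g1.
- move=> v /r1 /eqs_vars_zip; rewrite mem_cat.
  by case/orP => /flatten_term_vars_In h; [left|right].
Qed.

Lemma In_mem (T : eqType) (x : T) s : List.In x s <-> x \in s.
Proof.
elim: s => //= y s IH; rewrite inE; split.
  by case=> [->|/IH ->]; rewrite ?eqxx ?orbT.
by case/orP => [/eqP ->|/IH]; auto.
Qed.

Definition atom_vars (a : atom) : seq nat := flatten (map term_vars a.2).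

Definition pgoal_vars (G : pgoal) : seq nat := flatten (map (fun x : patom => atom_vars x.1) G).

Definition clause_vars (c : clause) : seq nat := atom_vars (chead c) ++ pgoal_vars (cbody c).

Lemma var_in_atomE v a : var_in_atom v a <-> v \in atom_vars a.
Proof.
split; first by case=> t h1 h2; apply: In_flatten_term_vars h1 h2.
by move/flatten_term_vars_In.
Qed.

Lemma pgoal_varsP v G : reflect (exists2 x, x \in G & v \in atom_vars x.1) (v \in pgoal_vars G).
Proof. exact: flatten_mapP. Qed.

Lemma var_in_pgoalE v G : var_in_pgoal v G <-> v \in pgoal_vars G.
Proof.
split.
  by case=> x /In_mem hx /var_in_atomE h; apply/pgoal_varsP; exists x.
by case/pgoal_varsP => x /In_mem hx /var_in_atomE h; exists x.
Qed.

Lemma pgoal_vars_cons x G : pgoal_vars (x :: G) = atom_vars x.1 ++ pgoal_vars G.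
Proof. by []. Qed.

Lemma atom_vars_subst_inv s a v : v \in atom_vars (atom_subst s a) ->
  exists2 u, u \in atom_vars a & v \in term_vars (s u).
Proof.
rewrite /atom_vars /atom_subst /= -map_comp.
case/flatten_mapP => t ht /term_vars_subst_inv [u hu hv].
by exists u => //; apply/flatten_mapP; exists t.
Qed.

Lemma pgoal_vars_subst_inv s G v : v \in pgoal_vars (pgoal_subst s G) ->
  exists2 u, u \in pgoal_vars G & v \in term_vars (s u).
Proof.
case/pgoal_varsP => y /mapP [x hx ->] /= /atom_vars_subst_inv [u hu hv].
by exists u => //; apply/pgoal_varsP; exists x.
Qed.

Lemma pgoal_vars_subst_cases th G v : v \in pgoal_vars (pgoal_subst th G) ->
  v \in pgoal_vars G \/ var_of_subst th v.
Proof.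
case/pgoal_vars_subst_inv => u hu hv; case: (th u =P Var u) => [e|ne].
  by move: hv; rewrite e inE => /eqP ->; left.
by right; right; exists u => //; rewrite var_in_termE.
Qed.

Lemma ren_clause_vars_inv c xi v :
  var_in_ren_clause c xi v -> exists2 u, u \in clause_vars c & v = xi u.
Proof.
case=> [/var_in_atomE /atom_vars_subst_inv|/var_in_pgoalE /pgoal_vars_subst_inv] [u hu];
  rewrite inE => /eqP ->; exists u => //; rewrite /clause_vars mem_cat hu ?orbT //.
Qed.

Lemma eq_in_atom_subst s1 s2 a :
  {in atom_vars a, s1 =1 s2} -> atom_subst s1 a = atom_subst s2 a.
Proof.
move=> h; rewrite /atom_subst; congr pair; apply/eq_in_map => t ht.
apply: eq_in_term_subst => v hv; apply: h; apply/flatten_mapP; by exists t.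
Qed.

Lemma eq_in_pgoal_subst s1 s2 G :
  {in pgoal_vars G, s1 =1 s2} -> pgoal_subst s1 G = pgoal_subst s2 G.
Proof.
move=> h; apply/eq_in_map => x hx /=; congr pair; apply: eq_in_atom_subst => v hv.
by apply: h; apply/pgoal_varsP; exists x.
Qed.

Lemma atom_subst_comp s1 s2 a :
  atom_subst s1 (atom_subst s2 a) = atom_subst (fun v => term_subst s1 (s2 v)) a.
Proof.
rewrite /atom_subst /= -map_comp; congr pair; apply: eq_map => t /=; exact: term_subst_comp.
Qed.

Lemma pgoal_subst_comp s1 s2 G :
  pgoal_subst s1 (pgoal_subst s2 G) = pgoal_subst (fun v => term_subst s1 (s2 v)) G.
Proof. rewrite /pgoal_subst -map_comp; apply: eq_map => x /=; by rewrite atom_subst_comp. Qed.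

Lemma atom_subst_Var a : atom_subst Var a = a.
Proof.
case: a => p ts; rewrite /atom_subst /=; congr pair.
by elim: ts => //= t ts ->; rewrite term_subst_Var.
Qed.

Lemma pgoal_subst_Var G : pgoal_subst Var G = G.
Proof. by elim: G => //= x G ->; rewrite atom_subst_Var -surjective_pairing. Qed.

Definition var_bound (s : seq nat) : nat := (foldr maxn 0 s).+1.

Lemma var_boundP v s : v \in s -> v < var_bound s.
Proof.
rewrite /var_bound; elim: s => //= x s IH; rewrite inE => /orP [/eqP ->|/IH h].
  by rewrite ltnS leq_maxl.
by apply: leq_trans h _; rewrite ltnS leq_maxr.
Qed.

Definition swap_block (M : nat) (v : nat) : nat :=
  if v < M then v + M else if v < M + M then v - M else v.

Lemma swap_blockK M v : swap_block M (swap_block M v) = v.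
Proof.
rewrite /swap_block; case: (ltnP v M) => h1.
  by rewrite ifF; [rewrite ifT; lia | lia].
case: (ltnP v (M + M)) => h2; first by rewrite ifT; lia.
by rewrite ifF; [rewrite ifF; lia | lia].
Qed.

Lemma swap_block_renaming M : renaming (swap_block M).
Proof. exact: (Bijective (swap_blockK M) (swap_blockK M)). Qed.

Lemma swap_block_lt M v : v < M -> M <= swap_block M v < M + M.
Proof. by move=> h; rewrite /swap_block h; lia. Qed.

Lemma swap_block_ren_clause M c v :
  {in clause_vars c, forall u, u < M} ->
  var_in_ren_clause c (swap_block M) v -> M <= v < M + M.
Proof. by move=> hc /ren_clause_vars_inv [u /hc /swap_block_lt hu ->]. Qed.

(** * Priorities, p-goals and shiftings *)

Local Open Scope ring_scope.

Lemma prio_disjointP (F G : pgoal) :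
  prio_disjoint F G <-> (forall p, p \in map snd F -> p \in map snd G -> False).
Proof.
split.
  move=> h p /mapP [x hx ->] /mapP [y hy ey]; apply: (h x y); rewrite ?In_mem //.
move=> h x y /In_mem hx /In_mem hy exy; apply: (h x.2); apply/mapP; [exists x|exists y] => //.
Qed.

Lemma is_pgoalE (G : pgoal) : is_pgoal G = sorted <%R (map snd G).
Proof. by rewrite /is_pgoal sorted_map. Qed.

Lemma prio_lt_trans : transitive (fun x y : patom => x.2 < y.2).
Proof. by move=> y x z /lt_trans h /h. Qed.

Lemma prio_lt_irr : irreflexive (fun x y : patom => x.2 < y.2).
Proof. by move=> x; rewrite ltxx. Qed.

Lemma pgoal_prios_uniq G : is_pgoal G -> uniq (map snd G).
Proof. by rewrite is_pgoalE; apply: sorted_uniq; [apply: lt_trans| apply: ltxx]. Qed.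

Lemma pgoal_uniq G : is_pgoal G -> uniq G.
Proof. by apply: sorted_uniq; [apply: prio_lt_trans|apply: prio_lt_irr]. Qed.

Lemma pgoal_eq_mem s1 s2 : is_pgoal s1 -> is_pgoal s2 -> s1 =i s2 -> s1 = s2.
Proof. by apply: irr_sorted_eq; [apply: prio_lt_trans|apply: prio_lt_irr]. Qed.

Lemma filter_prio_head (b : patom) K : is_pgoal (b :: K) ->
  filter (fun x : patom => x.2 != b.2) (b :: K) = K.
Proof.
move=> hbK; rewrite /= eqxx; apply/all_filterP/allP => x hx.
by move: (allP (order_path_min prio_lt_trans hbK) x hx); rewrite lt_neqAle eq_sym => /andP [].
Qed.

Lemma mem_pplus x A B : x \in pplus A B = (x \in A) || (x \in B).
Proof. by rewrite /pplus mem_sort mem_cat. Qed.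

Lemma perm_pplus A B : perm_eq (pplus A B) (A ++ B).
Proof. by rewrite /pplus perm_sort. Qed.

Lemma mem_map_pplus (T : eqType) (f : patom -> T) A B x :
  (x \in map f (pplus A B)) = (x \in map f A) || (x \in map f B).
Proof.
rewrite -mem_cat -map_cat; apply: perm_mem; apply: perm_map; exact: perm_pplus.
Qed.

Lemma mem_prios_pplus A B p :
  (p \in map snd (pplus A B)) = (p \in map snd A) || (p \in map snd B).
Proof. exact: mem_map_pplus. Qed.

Lemma mem_pgoal_vars_pplus A B v :
  (v \in pgoal_vars (pplus A B)) = (v \in pgoal_vars A) || (v \in pgoal_vars B).
Proof.
apply/pgoal_varsP/orP.
  case=> x; rewrite mem_pplus => /orP [hx|hx] hv; [left|right]; apply/pgoal_varsP; by exists x.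
case=> /pgoal_varsP [x hx hv]; exists x => //; by rewrite mem_pplus hx ?orbT.
Qed.

Lemma is_pgoal_pplus A B :
  is_pgoal A -> is_pgoal B -> prio_disjoint A B -> is_pgoal (pplus A B).
Proof.
move=> hA hB /prio_disjointP hd.
have hs : sorted (fun x y : patom => x.2 <= y.2) (pplus A B).
  apply: sort_sorted => x y; exact: le_total.
have hu : uniq (map snd (pplus A B)).
  rewrite (perm_uniq (perm_map snd (perm_pplus A B))) map_cat cat_uniq.
  rewrite !pgoal_prios_uniq //= andbT.
  by apply/hasPn => p hp; apply/negP => hp'; apply: hd hp' hp.
have hs' : sorted <=%R (map snd (pplus A B)) by rewrite sorted_map.
by rewrite is_pgoalE lt_sorted_uniq_le hu hs'.
Qed.

Lemma prios_subst s G : map snd (pgoal_subst s G) = map snd G.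
Proof. by rewrite /pgoal_subst -map_comp. Qed.

Lemma prios_shift pi G : map snd (pgoal_shift pi G) = map pi (map snd G).
Proof. by rewrite /pgoal_shift -!map_comp. Qed.

Lemma prios_shift_subst pi s G :
  map snd (pgoal_shift pi (pgoal_subst s G)) = map pi (map snd G).
Proof. by rewrite prios_shift prios_subst. Qed.

Lemma is_pgoal_subst s G : is_pgoal G -> is_pgoal (pgoal_subst s G).
Proof. by rewrite !is_pgoalE prios_subst. Qed.

Lemma prio_disjoint_prios A B A' B' : map snd A = map snd A' -> map snd B = map snd B' ->
  prio_disjoint A B -> prio_disjoint A' B'.
Proof. by move=> eA eB /prio_disjointP h; apply/prio_disjointP; rewrite -eA -eB. Qed.

Lemma prio_disjoint_sym A B : prio_disjoint A B -> prio_disjoint B A.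
Proof. by move=> /prio_disjointP h; apply/prio_disjointP => p h1 h2; exact: h h2 h1. Qed.

Lemma prio_disjoint_mem A B x y : prio_disjoint A B -> x \in A -> y \in B -> x.2 <> y.2.
Proof. by move=> h /In_mem hx /In_mem hy; apply: h. Qed.

Lemma prio_disjoint_consr A y B : prio_disjoint A (y :: B) -> prio_disjoint A B.
Proof. by move=> h x z hx hz; apply: h => //; right. Qed.

Lemma prio_disjoint_pplusl A B C :
  prio_disjoint A C -> prio_disjoint B C -> prio_disjoint (pplus A B) C.
Proof.
move=> /prio_disjointP h1 /prio_disjointP h2; apply/prio_disjointP => p.
by rewrite mem_prios_pplus => /orP [/h1|/h2].
Qed.

Lemma prio_disjoint_pplusr A B C :
  prio_disjoint C A -> prio_disjoint C B -> prio_disjoint C (pplus A B).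
Proof.
move=> h1 h2; apply: prio_disjoint_sym.
by apply: prio_disjoint_pplusl; apply: prio_disjoint_sym.
Qed.

Lemma prio_disjoint_pplus_inv A B C :
  prio_disjoint (pplus A B) C -> prio_disjoint A C /\ prio_disjoint B C.
Proof.
move=> /prio_disjointP h; split; apply/prio_disjointP => p hp; apply: h.
  by rewrite mem_prios_pplus hp.
by rewrite mem_prios_pplus hp orbT.
Qed.

Lemma prio_disjoint_subst s1 s2 A B :
  prio_disjoint A B -> prio_disjoint (pgoal_subst s1 A) (pgoal_subst s2 B).
Proof. by apply: prio_disjoint_prios; rewrite prios_subst. Qed.

Lemma pplus_subst s A B :
  pgoal_subst s (pplus A B) = pplus (pgoal_subst s A) (pgoal_subst s B).
Proof. by rewrite /pplus /pgoal_subst -map_cat sort_map. Qed.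

Lemma pplus_nilr K : is_pgoal K -> pplus K [::] = K.
Proof.
move=> hK; rewrite /pplus cats0; apply: sorted_sort.
  by move=> y x z /le_trans h /h.
by apply: sub_sorted hK => x y /ltW.
Qed.

Lemma pplusC A B : is_pgoal A -> is_pgoal B -> prio_disjoint A B -> pplus A B = pplus B A.
Proof.
move=> hA hB hd; apply: pgoal_eq_mem; try apply: is_pgoal_pplus => //.
  exact: prio_disjoint_sym.
by move=> x; rewrite !mem_pplus orbC.
Qed.

Lemma pplus_head_inr A y B z F :
  is_pgoal A -> is_pgoal (y :: B) -> prio_disjoint A (y :: B) ->
  pplus A (y :: B) = z :: F -> z \in y :: B -> z = y /\ F = pplus A B.
Proof.
move=> hA hyB hd e hz.
have hP : is_pgoal (z :: F) by rewrite -e; apply: is_pgoal_pplus.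
have hminF := order_path_min prio_lt_trans hP.
have hminB := order_path_min prio_lt_trans hyB.
have uF := pgoal_uniq hP; have uB := pgoal_uniq hyB.
move: uF uB => /= /andP [zF _] /andP [yB _].
have ezy : z = y.
  apply/eqP; apply/negPn/negP => nzy.
  have : y \in z :: F by rewrite -e mem_pplus mem_head orbT.
  rewrite inE eq_sym (negbTE nzy) /= => yF.
  move: hz; rewrite inE (negbTE nzy) /= => zB.
  have h1 := allP hminF y yF; have h2 := allP hminB z zB.
  by move: (lt_trans h1 h2); rewrite ltxx.
subst z; split => //.
apply: pgoal_eq_mem.
- by move: hP => /= /path_sorted.
- apply: is_pgoal_pplus => //; [by move: hyB => /= /path_sorted | exact: prio_disjoint_consr hd].
- move=> x; rewrite mem_pplus; apply/idP/idP.
  + move=> xF; have : x \in y :: F by rewrite mem_behead.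
    rewrite -e mem_pplus inE; case/orP => [->//|/orP [/eqP exy|->]]; last by rewrite orbT.
    by move: zF; rewrite -exy xF.
  + case/orP => [xA|xB].
    * have : x \in y :: F by rewrite -e mem_pplus xA.
      rewrite inE; case/orP => [/eqP exy|//].
      by exfalso; apply: (prio_disjoint_mem hd xA (mem_head y B)); rewrite exy.
    * have : x \in y :: F by rewrite -e mem_pplus inE xB !orbT.
      rewrite inE; case/orP => [/eqP exy|//].
      by move: yB; rewrite -exy xB.
Qed.

Lemma pplus_cancel A B X : is_pgoal A -> is_pgoal B -> is_pgoal X ->
  prio_disjoint A X -> prio_disjoint B X -> pplus A X = pplus B X -> A = B.
Proof.
move=> hA hB hX dA dB e; apply: pgoal_eq_mem => // x; apply/idP/idP => hx.
- have : x \in pplus B X by rewrite -e mem_pplus hx.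
  rewrite mem_pplus => /orP [//|xX]; by exfalso; apply: (prio_disjoint_mem dA hx xX).
- have : x \in pplus A X by rewrite e mem_pplus hx.
  rewrite mem_pplus => /orP [//|xX]; by exfalso; apply: (prio_disjoint_mem dB hx xX).
Qed.

Lemma shifting_id : shifting (fun q : rat => q).
Proof. split => //; exact: (Bijective (fun x => erefl x) (fun x => erefl x)). Qed.

Lemma shifting_comp p1 p2 : shifting p1 -> shifting p2 -> shifting (fun q => p1 (p2 q)).
Proof.
move=> [h1 b1] [h2 b2]; split; first by move=> x y /h2 /h1.
exact: bij_comp b1 b2.
Qed.

Lemma shifting_inj pi : shifting pi -> injective pi.
Proof. by case=> _ /bij_inj. Qed.

Lemma shifting_inv tau : shifting tau ->
  exists g, [/\ shifting g, cancel tau g & cancel g tau].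
Proof.
move=> [ht [g c1 c2]]; exists g; split => //; split; last by exists tau.
move=> x y hxy; rewrite ltNge; apply/negP => hyx.
have : tau (g y) <= tau (g x).
  move: hyx; rewrite le_eqVlt => /orP [/eqP ->//|/ht /ltW //].
by rewrite !c2 leNgt hxy.
Qed.

Lemma pgoal_shift_id G : pgoal_shift (fun q => q) G = G.
Proof. by elim: G => //= x G ->; rewrite -surjective_pairing. Qed.

Lemma pgoal_shift_subst pi s G :
  pgoal_shift pi (pgoal_subst s G) = pgoal_subst s (pgoal_shift pi G).
Proof. by rewrite /pgoal_shift /pgoal_subst -!map_comp. Qed.

Lemma pgoal_vars_shift pi G : pgoal_vars (pgoal_shift pi G) = pgoal_vars G.
Proof. by rewrite /pgoal_vars /pgoal_shift -map_comp. Qed.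

Lemma shift_eq_in_prios rho tau s K : {in map snd K, rho =1 tau} ->
  pgoal_shift rho (pgoal_subst s K) = pgoal_shift tau (pgoal_subst s K).
Proof.
move=> e; rewrite /pgoal_shift /pgoal_subst -!map_comp; apply/eq_in_map => x hx /=.
by rewrite e // map_f.
Qed.

Lemma is_pgoal_shift pi G : shifting pi -> is_pgoal G -> is_pgoal (pgoal_shift pi G).
Proof.
move=> [hpi _] hG; rewrite is_pgoalE prios_shift sorted_map; rewrite is_pgoalE in hG.
by apply: sub_sorted hG => x y; apply: hpi.
Qed.

Lemma prio_disjoint_shift pi A B : shifting pi -> prio_disjoint A B ->
  prio_disjoint (pgoal_shift pi A) (pgoal_shift pi B).
Proof.
move=> hpi /prio_disjointP h; apply/prio_disjointP => p; rewrite !prios_shift.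
move=> /mapP [q1 h1 ->] /mapP [q2 h2 /(shifting_inj hpi) e]; apply: (h q1) => //.
by rewrite e.
Qed.

Lemma prio_disjoint_shift_cancel tau g A B : cancel g tau ->
  prio_disjoint (pgoal_shift tau A) B -> prio_disjoint A (pgoal_shift g B).
Proof.
move=> gK /prio_disjointP h; apply/prio_disjointP => p hA; rewrite prios_shift.
case/mapP => q hq ep; apply: (h (tau p)); first by rewrite prios_shift map_f.
by rewrite ep gK.
Qed.

Lemma pplus_shift pi A B : shifting pi -> is_pgoal A -> is_pgoal B -> prio_disjoint A B ->
  pgoal_shift pi (pplus A B) = pplus (pgoal_shift pi A) (pgoal_shift pi B).
Proof.
move=> hpi hA hB hd; apply: pgoal_eq_mem.
- by apply: is_pgoal_shift => //; apply: is_pgoal_pplus.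
- apply: is_pgoal_pplus; try apply: is_pgoal_shift => //; exact: prio_disjoint_shift.
- by move=> x; rewrite mem_pplus mem_map_pplus.
Qed.

Definition mk_step (G : pgoal) (c : clause) (xi : nat -> nat) (th : subst)
    (pi : rat -> rat) : step :=
  Step G c xi th pi
    (pgoal_subst th (pplus (behead G) (pgoal_shift pi (pgoal_subst (ren_subst xi) (cbody c))))).

Lemma valid_mk_step a K c xi th pi :
  is_pgoal (a :: K) -> clause_ok c -> renaming xi ->
  (forall v, var_in_pgoal v (a :: K) -> ~ var_in_ren_clause c xi v) ->
  idem_rel_mgu th a.1 (atom_subst (ren_subst xi) (chead c)) -> shifting pi ->
  prio_disjoint K (pgoal_shift pi (pgoal_subst (ren_subst xi) (cbody c))) ->
  valid_step (mk_step (a :: K) c xi th pi).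
Proof. by move=> *; exists a, K; do 8 split => //. Qed.

Lemma valid_step_pgoal d : valid_step d -> is_pgoal (s_goal d).
Proof. by case=> a [F [-> [h _]]]. Qed.

Lemma valid_step_resE d : valid_step d -> exists a F,
  [/\ s_goal d = a :: F, is_pgoal (a :: F), is_pgoal (ren_body d),
      prio_disjoint F (ren_body d)
    & s_res d = pgoal_subst (s_mgu d) (pplus F (ren_body d))].
Proof.
move=> [a [F [eg [hg [hc [_ [_ [_ [hpi [hdisj hres]]]]]]]]]]; exists a, F; split => //.
by apply: is_pgoal_shift => //; apply: is_pgoal_subst.
Qed.

Lemma valid_step_res_pgoal d : valid_step d -> is_pgoal (s_res d).
Proof.
case/valid_step_resE => a [F [_ hg hR hFR ->]].
by apply: is_pgoal_subst; apply: is_pgoal_pplus => //; move: hg => /= /path_sorted.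
Qed.

Lemma valid_step_res_vars d v : valid_step d ->
  v \in pgoal_vars (s_res d) ->
  v \in pgoal_vars (s_goal d) \/ var_in_ren_clause (s_clause d) (s_ren d) v.
Proof.
move=> [a [F [-> [_ [_ [_ [_ [[_ [_ hrel]] [_ [_ ->]]]]]]]]]].
case/pgoal_vars_subst_cases => [|/hrel [/var_in_atomE hv|hv]].
- rewrite mem_pgoal_vars_pplus => /orP [hv|].
    by left; rewrite pgoal_vars_cons mem_cat hv orbT.
  by rewrite /ren_body pgoal_vars_shift => hv; right; right; apply/var_in_pgoalE.
- by left; rewrite pgoal_vars_cons mem_cat hv.
- by right; left.
Qed.

Lemma resolvent_select_left d X P :
  valid_step d -> is_pgoal X -> is_pgoal P -> prio_disjoint X P ->
  s_goal d = pplus X P -> (forall a F, s_goal d = a :: F -> a.2 \notin map snd P) ->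
  exists X', [/\ is_pgoal X', prio_disjoint X' (pgoal_subst (s_mgu d) P)
    & s_res d = pplus X' (pgoal_subst (s_mgu d) P)].
Proof.
move=> hv hX hP hXP eg hsel; have [a [F [eg' hg hR hFR ->]]] := valid_step_resE hv.
have aX : a \in X.
  have : a \in pplus X P by rewrite -eg eg' mem_head.
  by rewrite mem_pplus => /orP [//|/(map_f snd) ha]; move: (hsel _ _ eg'); rewrite ha.
case: X hX hXP eg aX => [//|x X1] hX hXP eg aX.
have hPX := prio_disjoint_sym hXP.
have [_ eF] : a = x /\ F = pplus P X1.
  by apply: (pplus_head_inr hP hX hPX) => //; rewrite -(pplusC hX hP hXP) -eg.
have hX1 : is_pgoal X1 by move: hX => /= /path_sorted.
have hPX1 := prio_disjoint_consr hPX.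
move: hFR; rewrite eF => /prio_disjoint_pplus_inv [hPR hX1R].
exists (pgoal_subst (s_mgu d) (pplus X1 (ren_body d))); split.
- by apply: is_pgoal_subst; apply: is_pgoal_pplus.
- by apply: prio_disjoint_subst; apply: prio_disjoint_pplusl; apply: prio_disjoint_sym.
rewrite -pplus_subst; congr pgoal_subst; apply: pgoal_eq_mem.
- by apply: is_pgoal_pplus; [exact: is_pgoal_pplus | | exact: prio_disjoint_pplusl].
- apply: is_pgoal_pplus => //; first exact: is_pgoal_pplus.
  by apply: prio_disjoint_pplusl; apply: prio_disjoint_sym.
- move=> y; rewrite !mem_pplus.
  by case: (y \in P); case: (y \in X1); case: (y \in ren_body d).
Qed.

Lemma resolvent_select_right d X b K :
  valid_step d -> is_pgoal X -> is_pgoal (b :: K) -> prio_disjoint X (b :: K) ->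
  s_goal d = pplus X (b :: K) -> (forall a F, s_goal d = a :: F -> a.2 \in map snd (b :: K)) ->
  [/\ s_goal d = b :: pplus X K,
      prio_disjoint (pgoal_subst (s_mgu d) X) (pgoal_subst (s_mgu d) (pplus K (ren_body d)))
    & s_res d = pplus (pgoal_subst (s_mgu d) X) (pgoal_subst (s_mgu d) (pplus K (ren_body d)))].
Proof.
move=> hv hX hbK hXbK eg hsel; have [a [F [eg' hg hR hFR ->]]] := valid_step_resE hv.
have abK : a \in b :: K.
  have : a \in pplus X (b :: K) by rewrite -eg eg' mem_head.
  rewrite mem_pplus => /orP [/(map_f snd) aX|//].
  by case: (proj1 (prio_disjointP _ _) hXbK _ aX (hsel _ _ eg')).
have hK : is_pgoal K by move: hbK => /= /path_sorted.
have [<- eF] := pplus_head_inr hX hbK hXbK (etrans (esym eg) eg') abK.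
have hXK := prio_disjoint_consr hXbK.
move: hFR; rewrite eF => /prio_disjoint_pplus_inv [hXR hKR].
split; first by rewrite eg' eF.
  by apply: prio_disjoint_subst; apply: prio_disjoint_pplusr.
rewrite -pplus_subst; congr pgoal_subst; apply: pgoal_eq_mem.
- by apply: is_pgoal_pplus; [exact: is_pgoal_pplus | | exact: prio_disjoint_pplusl].
- by apply: is_pgoal_pplus; [| exact: is_pgoal_pplus | exact: prio_disjoint_pplusr].
- move=> y; rewrite !mem_pplus.
  by case: (y \in X); case: (y \in K); case: (y \in ren_body d).
Qed.

Lemma cong_lowering_nil d d' a K : valid_step d -> valid_step d' ->
  s_goal d = a :: K -> s_goal d' = a :: K -> s_clause d' = s_clause d ->
  s_shift d' = s_shift d -> cong_lowering d d' [::].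
Proof.
move=> vd vd' e e' ec es.
have hK : is_pgoal (a :: K) by rewrite -e; apply: valid_step_pgoal.
have hK' : is_pgoal K by move: hK => /= /path_sorted.
exists Var, (fun q => q), a, K, (fun q => q); split; last split.
- rewrite /lowering_with; split; first done. split; first done.
  split; first exact: shifting_id. split; first done. split; first done. split; first done.
  rewrite pgoal_subst_Var pgoal_shift_id pplus_nilr //; split; first by move=> x y _ [].
  split; last by rewrite e' pgoal_subst_Var pgoal_shift_id.
  move=> y /In_mem hy; have := order_path_min prio_lt_trans hK; by move/allP/(_ y hy).
- exact: shifting_id.
- by [].
- by rewrite pgoal_shift_id es ec.
Qed.

Lemma S_valid_step S d : complete S -> S d -> valid_step d.
Proof. by case=> + _ _; apply. Qed.

(* Completeness only provides some step of [S] with the given goal and clause;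
   closure under mutual congruent lowering lets us replace its renaming and mgu
   while keeping its shifting. *)
Lemma S_mk_step S a K c xi th pi : complete S ->
  is_pgoal (a :: K) -> clause_ok c -> renaming xi ->
  (forall v, var_in_pgoal v (a :: K) -> ~ var_in_ren_clause c xi v) ->
  idem_rel_mgu th a.1 (atom_subst (ren_subst xi) (chead c)) -> shifting pi ->
  prio_disjoint K (pgoal_shift pi (pgoal_subst (ren_subst xi) (cbody c))) ->
  exists pi0, S (mk_step (a :: K) c xi th pi0).
Proof.
move=> [S_valid S_ex S_cong] hG hc hxi hfresh hth hpi hdisj.
have [d0 [Sd0 eg0 ec0]] := S_ex (a :: K) c
  (ex_intro _ _ (And3 (valid_mk_step hG hc hxi hfresh hth hpi hdisj) erefl erefl)).
exists (s_shift d0).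
have [a0 [F0 [eg0' [_ [_ [_ [_ [_ [hsh0 [hdisj0 _]]]]]]]]]] := S_valid d0 Sd0.
move: eg0'; rewrite eg0 => -[_ eF0]; subst F0.
have hv : valid_step (mk_step (a :: K) c xi th (s_shift d0)).
  apply: valid_mk_step => //; move: hdisj0; apply: prio_disjoint_prios => //.
  by rewrite /ren_body !prios_shift_subst ec0.
have hv0 := S_valid d0 Sd0.
apply: (S_cong d0 _ Sd0 hv); split; exists [::].
  exact: (cong_lowering_nil hv0 hv eg0 erefl (esym ec0)).
exact: (cong_lowering_nil hv hv0 erefl eg0 ec0).
Qed.

Lemma lowering_congruent_shift S d1 d2 a K X gamma tau :
  spec_independent S -> S d1 -> S d2 -> valid_step d1 -> valid_step d2 ->
  s_goal d1 = a :: K -> s_clause d2 = s_clause d1 ->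
  shifting tau -> is_pgoal X -> prio_disjoint X (pgoal_shift tau (pgoal_subst gamma K)) ->
  s_goal d2 = (atom_subst gamma a.1, tau a.2) :: pplus X (pgoal_shift tau (pgoal_subst gamma K)) ->
  exists rho, [/\ shifting rho, {in map snd K, rho =1 tau} &
    pgoal_shift rho (pgoal_shift (s_shift d1) (cbody (s_clause d1))) =
    pgoal_shift (s_shift d2) (cbody (s_clause d2))].
Proof.
move=> S_indep Sd1 Sd2 hv1 hv2 eg1 ec htau hX hXK eg2.
set KT := pgoal_shift tau (pgoal_subst gamma K).
have hK : is_pgoal K by move: (valid_step_pgoal hv1); rewrite eg1 => /path_sorted.
have hKT : is_pgoal KT by apply: is_pgoal_shift => //; apply: is_pgoal_subst.
have ePKX : pplus KT X = pplus X KT by apply: pplusC => //; exact: prio_disjoint_sym.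
have hlow : lowering d1 d2 X.
  exists gamma, tau, a, K; do 6 split => //; split; first exact: prio_disjoint_sym.
  split; last by rewrite eg2 ePKX.
  move=> y /In_mem; rewrite ePKX => hy.
  by have := valid_step_pgoal hv2; rewrite eg2 => /(order_path_min prio_lt_trans)/allP; apply.
have [lam [sig [a' [K' [rho [hlw [hrho hKrho hBrho]]]]]]] := S_indep _ _ _ Sd1 Sd2 hlow.
case: hlw => _ [_ [hsig [_ [eg1' [_ [hdisj' [_ eg2']]]]]]].
move: eg1'; rewrite eg1 => -[ea eK]; subst a' K'.
have eKsig : pgoal_shift sig (pgoal_subst lam K) = KT.
  apply: (pplus_cancel (X := X)) => //.
  - by apply: is_pgoal_shift => //; apply: is_pgoal_subst.
  - exact: prio_disjoint_sym.
  - by move: eg2'; rewrite eg2 => -[_ _ e]; rewrite -e ePKX.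
exists rho; split => //; apply/eq_in_map.
have := congr1 (map snd) hKrho; rewrite !prios_shift => ->.
by have := congr1 (map snd) eKsig; rewrite /KT !prios_shift_subst.
Qed.

Lemma apart_sub (used used' : nat -> Prop) ds :
  (forall v, used v -> used' v) -> apart used' ds -> apart used ds.
Proof.
elim: ds used used' => //= d ds IH used used' sub [fresh rest]; split.
  by move=> v /fresh + /sub.
by apply: IH rest => v [/sub|]; [left|right].
Qed.

(** * Lifting derivations *)

Definition swap_glue (M : nat) (s1 s2 : subst) : subst :=
  fun v => if (M <= v)%N then s2 (swap_block M v) else s1 v.

Lemma swap_glue_lt M s1 s2 v : (v < M)%N -> swap_glue M s1 s2 v = s1 v.
Proof. by rewrite /swap_glue ltnNge => /negbTE ->. Qed.

Lemma swap_glue_swap M s1 s2 u : (u < M)%N -> swap_glue M s1 s2 (swap_block M u) = s2 u.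
Proof. by move/swap_block_lt/andP => [hM _]; rewrite /swap_glue hM swap_blockK. Qed.

(* The variables of [a] lie below [M] and those of the renamed [h] in
   [[M, 2M)], so the two substitutions can be glued into one. *)
Lemma swap_glue_unifier M (a h : atom) gamma xi th :
  {in atom_vars a, forall v, v < M}%N -> {in atom_vars h, forall u, u < M}%N ->
  unifier th (atom_subst gamma a) (atom_subst (ren_subst xi) h) ->
  unifier (swap_glue M (fun v => term_subst th (gamma v)) (fun u => th (xi u)))
          a (atom_subst (ren_subst (swap_block M)) h).
Proof.
move=> ha hh; rewrite /unifier !atom_subst_comp => e.
rewrite (eq_in_atom_subst (s2 := fun v => term_subst th (gamma v))); last first.
  by move=> v /ha /swap_glue_lt ->.
rewrite e; apply: eq_in_atom_subst => u /hh hu /=.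
by rewrite swap_glue_swap.
Qed.

Lemma shift_subst_resolvent K B gamma th1 th2 eta delta xi xi2 tau rho pi0 pi2 :
  is_pgoal K -> is_pgoal (pgoal_shift pi0 (pgoal_subst (ren_subst xi) B)) -> shifting rho ->
  prio_disjoint K (pgoal_shift pi0 (pgoal_subst (ren_subst xi) B)) ->
  (forall v, delta v = term_subst eta (th1 v)) ->
  {in pgoal_vars K, forall v, delta v = term_subst th2 (gamma v)} ->
  {in pgoal_vars B, forall u, delta (xi u) = th2 (xi2 u)} ->
  {in map snd K, rho =1 tau} ->
  pgoal_shift rho (pgoal_shift pi0 B) = pgoal_shift pi2 B ->
  pgoal_shift rho (pgoal_subst eta
    (pgoal_subst th1 (pplus K (pgoal_shift pi0 (pgoal_subst (ren_subst xi) B))))) =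
  pgoal_subst th2 (pplus (pgoal_shift tau (pgoal_subst gamma K))
                         (pgoal_shift pi2 (pgoal_subst (ren_subst xi2) B))).
Proof.
move=> hK hB1 hrho hdisj heta hdK hdB erho eB.
set B1 := pgoal_shift pi0 (pgoal_subst (ren_subst xi) B).
have eK' : pgoal_shift rho (pgoal_subst delta K) =
           pgoal_subst th2 (pgoal_shift tau (pgoal_subst gamma K)).
  rewrite (@eq_in_pgoal_subst delta (fun v => term_subst th2 (gamma v))) //.
  by rewrite (shift_eq_in_prios _ erho) -pgoal_shift_subst pgoal_subst_comp.
have eB' : pgoal_shift rho (pgoal_subst delta B1) =
           pgoal_subst th2 (pgoal_shift pi2 (pgoal_subst (ren_subst xi2) B)).
  rewrite /B1 -pgoal_shift_subst pgoal_subst_comp.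
  rewrite (@eq_in_pgoal_subst _ (fun u => term_subst th2 (ren_subst xi2 u))); last first.
    by move=> u hu /=; rewrite hdB.
  by rewrite !pgoal_shift_subst eB -pgoal_subst_comp.
rewrite pgoal_subst_comp (@eq_in_pgoal_subst _ delta); last by move=> v _; rewrite heta.
rewrite pplus_subst pplus_shift ?eK' ?eB' -?pplus_subst //;
  by [apply: is_pgoal_subst | apply: prio_disjoint_subst].
Qed.

Lemma lift_selected_step S d2 a K X gamma tau M :
  spec_indep_sched_rule S -> S d2 -> valid_step d2 ->
  is_pgoal (a :: K) -> is_pgoal X -> shifting tau ->
  prio_disjoint X (pgoal_shift tau (pgoal_subst gamma K)) ->
  s_goal d2 = (atom_subst gamma a.1, tau a.2) :: pplus X (pgoal_shift tau (pgoal_subst gamma K)) ->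
  {in pgoal_vars (a :: K), forall v, v < M}%N ->
  {in clause_vars (s_clause d2), forall u, u < M}%N ->
  exists th1 pi0 eta rho,
    let d1 := mk_step (a :: K) (s_clause d2) (swap_block M) th1 pi0 in
    [/\ S d1, shifting rho &
        pgoal_shift rho (pgoal_subst eta (s_res d1)) =
        pgoal_subst (s_mgu d2) (pplus (pgoal_shift tau (pgoal_subst gamma K)) (ren_body d2))].
Proof.
move=> [S_complete S_indep] Sd2 hv2 hG hX htau hXK eg2 hGM hcM.
case: (hv2) => a2 [F [eg2' [_ [hc [_ [_ [hmgu2 [hpi2 [hdisj2 _]]]]]]]]].
move: eg2'; rewrite eg2 => -[ea2 eF]; subst a2 F.
have hK : is_pgoal K by move: hG => /= /path_sorted.
set delta := swap_glue M (fun v => term_subst (s_mgu d2) (gamma v))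
                         (fun u => s_mgu d2 (s_ren d2 u)).
have hunif : unifier delta a.1 (atom_subst (ren_subst (swap_block M)) (chead (s_clause d2))).
  apply: swap_glue_unifier; last by case: hmgu2 => [[]].
    by move=> v hv; apply: hGM; rewrite pgoal_vars_cons mem_cat hv.
  by move=> u hu; apply: hcM; rewrite /clause_vars mem_cat hu.
have [th1 hth1] := idem_rel_mgu_exists (ex_intro _ delta hunif).
have [eta heta] : more_general th1 delta by case: hth1 => [[_]] /(_ _ hunif).
have hfresh v : var_in_pgoal v (a :: K) -> ~ var_in_ren_clause (s_clause d2) (swap_block M) v.
  move=> /var_in_pgoalE /hGM hv /(swap_block_ren_clause hcM); lia.
have [g [hg _ gK]] := shifting_inv htau.
(* Pulling the body of [d2] back along [tau] keeps it clear of [K]. *)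
have hKB : prio_disjoint K (pgoal_shift (fun q => g (s_shift d2 q))
                 (pgoal_subst (ren_subst (swap_block M)) (cbody (s_clause d2)))).
  apply: prio_disjoint_prios
    (prio_disjoint_shift_cancel gK (proj2 (prio_disjoint_pplus_inv hdisj2))).
    exact: prios_subst.
  by rewrite prios_shift /ren_body !prios_shift_subst -map_comp.
have [pi0 Sd1] := S_mk_step S_complete hG hc (swap_block_renaming M) hfresh hth1
  (shifting_comp hg hpi2) hKB.
have hv1 : valid_step _ := S_valid_step S_complete Sd1.
have [rho [hrho erho eB]] := lowering_congruent_shift S_indep Sd1 Sd2 hv1 hv2 erefl erefl
  htau hX hXK eg2.
exists th1, pi0, eta, rho; split => //.
have [a' [F' [[_ eF'] _ hB1 hKB1 _]]] := valid_step_resE hv1; subst F'.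
apply: (shift_subst_resolvent (delta := delta)) => // [v /= hv|u hu].
  by rewrite /delta swap_glue_lt // hGM // pgoal_vars_cons mem_cat hv orbT.
by rewrite /delta swap_glue_swap // hcM // /clause_vars mem_cat hu orbT.
Qed.

(* All variables below [N] are treated as used, over-approximating the set
   tracked by [apart]. *)
Definition lifting (S : step -> Prop) (V : seq nat) (G : pgoal) (N : nat) (T : seq clause) :=
  exists Dr, [/\ chain G Dr, apart (fun v => v < N)%N Dr, via S Dr, template Dr = T
    & forall v, nvar Dr v -> v \notin V].

Lemma lifting_cons S V d G N M T : S d -> valid_step d -> s_goal d = G -> (N <= M)%N ->
  (forall v, var_in_ren_clause (s_clause d) (s_ren d) v -> (N <= v < M)%N /\ v \notin V) ->
  lifting S V (s_res d) M T -> lifting S V G N (s_clause d :: T).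
Proof.
move=> Sd hv eg hNM hren [Dr [hch hap hvia htpl hV]]; exists (d :: Dr); split => //.
- split => //; first by move=> v /hren [/andP [hNv _] _]; apply/negP; rewrite -leqNgt.
  apply: apart_sub hap => v [hvN|/hren [/andP [_ //] _]].
  exact: leq_trans hvN hNM.
- by move=> d' [<-|/hvia].
- by rewrite /= htpl.
- by move=> v [d' [<-|hd'] hvd]; [case: (hren v hvd) | apply: hV; exists d'].
Qed.

Lemma exists_fresh_bound N (V s : seq nat) :
  exists M, [/\ (N <= M)%N, {in V, forall v, v < M}%N & {in s, forall u, u < M}%N].
Proof.
exists (maxn N (var_bound (V ++ s))); split; first exact: leq_maxl.
  by move=> v hv; apply: leq_trans (leq_maxr _ _); apply: var_boundP; rewrite mem_cat hv.
by move=> u hu; apply: leq_trans (leq_maxr _ _); apply: var_boundP; rewrite mem_cat hu orbT.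
Qed.

Lemma lift_derivation (S : step -> Prop) (V : seq nat) : spec_indep_sched_rule S ->
  forall D G X gamma tau N,
  is_pgoal G -> is_pgoal X -> shifting tau ->
  prio_disjoint X (pgoal_shift tau (pgoal_subst gamma G)) ->
  chain (pplus X (pgoal_shift tau (pgoal_subst gamma G))) D -> via S D ->
  {in pgoal_vars G, forall v, v < N}%N ->
  lifting S V G N (subtemplate (pgoal_shift tau (pgoal_subst gamma G)) D).
Proof.
move=> hS; elim=> [|d2 D IH] G X gamma tau N hG hX htau hXP hch hvia hGN.
  by exists [::]; split => // v [d []].
case: hch => eg hv2 hch.
have Sd2 : S d2 by apply: hvia; left.
have hvia' : via S D by move=> d hd; apply: hvia; right.
set P := pgoal_shift tau (pgoal_subst gamma G).
have hP : is_pgoal P by apply: is_pgoal_shift => //; apply: is_pgoal_subst.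
have [a2 [F2 [eg2 _ _ _ _]]] := valid_step_resE hv2.
rewrite /= eg2; case: ifPn => hsel; last first.
  have hselX a F : s_goal d2 = a :: F -> a.2 \notin map snd P by rewrite eg2 => -[<- _].
  have [X' [hX' hdisj eres]] := resolvent_select_left hv2 hX hP hXP eg hselX.
  rewrite /P -pgoal_shift_subst pgoal_subst_comp in hdisj eres *.
  by apply: IH hG hX' htau hdisj _ hvia' hGN; rewrite -eres.
case: G hG hGN @P hP hXP eg hsel => [//|a K] hG hGN P hP hXP eg hsel.
have hselG b F : s_goal d2 = b :: F -> b.2 \in map snd P by rewrite eg2 => -[<- _].
have [eg2' hdisj eres] := resolvent_select_right hv2 hX hP hXP eg hselG.
have ea2 : a2 = (atom_subst gamma a.1, tau a.2) by move: eg2; rewrite eg2' => -[].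
rewrite ea2 (filter_prio_head (K := pgoal_shift tau (pgoal_subst gamma K)) hP).
have [M [hNM hVM hcM]] := exists_fresh_bound N V (clause_vars (s_clause d2)).
have hGM : {in pgoal_vars (a :: K), forall v, v < M}%N.
  by move=> v /hGN /leq_trans; apply.
have [th1 [pi0 [eta [rho [Sd1 hrho eT]]]]] :=
  lift_selected_step hS Sd2 hv2 hG hX htau (prio_disjoint_consr hXP) eg2' hGM hcM.
set d1 := mk_step _ _ _ _ _ in Sd1 eT.
have hv1 : valid_step d1 := S_valid_step (proj1 hS) Sd1.
have hren v : var_in_ren_clause (s_clause d2) (swap_block M) v -> (M <= v < M + M)%N.
  exact: swap_block_ren_clause.
apply: (lifting_cons (M := M + M) Sd1 hv1 erefl).
- exact: leq_trans hNM (leq_addr _ _).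
- move=> v /hren /andP [hMv hvM]; split; first by rewrite hvM (leq_trans hNM hMv).
  by apply/negP => /hVM; rewrite ltnNge hMv.
rewrite -eT in hdisj eres *; rewrite eres in hch.
apply: (IH _ _ _ _ _ (valid_step_res_pgoal hv1) (is_pgoal_subst _ hX) hrho hdisj hch hvia').
move=> v /(valid_step_res_vars hv1) [/hGM hv|/hren /andP [] //].
exact: leq_trans hv (leq_addr _ _).
Qed.

Theorem lemmaL3p2p1 (S : step -> Prop) (V : seq nat) (G X : pgoal)
    (gamma : subst) (tau : rat -> rat) (D : seq step) :
  spec_indep_sched_rule S ->
  is_pgoal G -> is_pgoal X -> shifting tau ->
  prio_disjoint X (pgoal_shift tau (pgoal_subst gamma G)) ->
  pSLD (pplus X (pgoal_shift tau (pgoal_subst gamma G))) D -> via S D ->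
  exists Dr : seq step,
    [/\ pSLD G Dr, via S Dr,
        template Dr = subtemplate (pgoal_shift tau (pgoal_subst gamma G)) D
      & forall v, nvar Dr v -> v \notin V].
Proof.
move=> hS hG hX htau hXP [hch _] hvia.
have hGN : {in pgoal_vars G, forall v, v < var_bound (pgoal_vars G)}%N by move=> v /var_boundP.
have [Dr [hchr hapart hviar htpl hV]] := lift_derivation V hS hG hX htau hXP hch hvia hGN.
exists Dr; split => //; split => //.
by apply: apart_sub hapart => v /var_in_pgoalE /var_boundP.
Qed.
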